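(* Let $\mathcal{W}=(Q,\Sigma,\delta,q_\iota,\mathrm{Acc})$ be a binary-branching probabilistic parity word automaton, and for $q\in Q,a\in\Sigma$ write $\delta(q,a)=\{q_1,q_2\}$ for the two distinct states with $\delta(q,a,q_i)=\tfrac12$. Let $\mathcal{A}_\mathcal{W}=(Q,\Sigma,\delta_1,q_\iota,\mathrm{Acc})$ be the probabilistic tree automaton with $\delta_1(p,a,q,q)=\delta(p,a,q)$ and $\delta_1(p,a,q,q')=0$ for $q\neq q'$, and let $\mathcal{A}^{\mathrm{switch}}_\mathcal{W}=(Q,\Sigma,\delta_2,q_\iota,\mathrm{Acc})$ be the probabilistic tree automaton with $\delta_2(p,a,q_1,q_2)=\delta_2(p,a,q_2,q_1)=\tfrac12$ whenever $\delta(p,a)=\{q_1,q_2\}$, and $\delta_2(p,a,q,q')=0$ otherwise. Then $\mathcal{L}^{=1}_{\mathrm{qual}}(\mathcal{A}_\mathcal{W})=\mathcal{L}^{=1}_{\mathrm{qual}}(\mathcal{A}^{\mathrm{switch}}_\mathcal{W})$.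
   Context: Probabilistic word automaton: $(Q,\Sigma,\delta,q_\iota,\mathrm{Acc})$, $Q$ finite, $\Sigma$ finite, $\delta:Q\times\Sigma\times Q\to[0,1]$ with $\sum_p\delta(q,a,p)=1$. Binary branching: all transition probabilities lie in $\{0,\tfrac12\}$. Parity condition given by $\alpha:Q\to\{0,\dots,k\}$: a sequence $r\in Q^\omega$ is in $\mathrm{Acc}$ iff the minimum of $\alpha(q)$ over states occurring infinitely often in $r$ is even. Trees: a $\Sigma$-tree is a map $t:\{0,1\}^*\to\Sigma$; a branch is $\pi\in\{0,1\}^\omega$ and $t(\pi)=t(\epsilon)t(\pi_0)t(\pi_0\pi_1)\cdots$. The coin-flipping measure $\mu$ on $\{0,1\}^\omega$ gives the cone $u\{0,1\}^\omega$ measure $2^{-|u|}$. A probabilistic tree automaton is $(Q,\Sigma,\delta,q_\iota,\mathrm{Acc})$ with $\delta:Q\times\Sigma\times Q\times Q\to[0,1]$, $\sum_{q_0,q_1}\delta(q,a,q_0,q_1)=1$. A run on $t$ is a $Q$-tree $\rho$ with $\rho(\epsilon)=q_\iota$ and $\delta(\rho(u),t(u),\rho(u0),\rho(u1))>0$ for all $u$. A run is qualitatively accepting if $\mu(\{\pi:\rho(\pi)\in\mathrm{Acc}\})=1$. The measure $\mu_t$ on runs on $t$: the set of runs agreeing with a given partial run on all nodes of length $\le n$ has measure $\prod_{|u|<n}\delta(\rho(u),t(u),\rho(u0),\rho(u1))$ (children labels chosen independently at every node). $\mathcal{L}^{=1}_{\mathrm{qual}}(\mathcal{A})=\{t:\mu_t(\{\rho:\rho\text{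 qualitatively accepting}\})=1\}$. *)

From HB Require Import structures.
From mathcomp Require Import all_boot all_order all_algebra.
From mathcomp Require Import all_classical all_reals all_analysis.
Set Implicit Arguments. Unset Strict Implicit. Unset Printing Implicit Defensive.
Import Order.TTheory GRing.Theory Num.Theory.
Local Open Scope classical_set_scope.
Local Open Scope ring_scope.

(* Encoding: the direction 0 is [false], 1 is [true]; a node of the binary
   tree is a word [u : seq bool]; [rcons u false] is u0, [rcons u true] is u1. *)

Definition prefix (pi : nat -> bool) (n : nat) : seq bool := mkseq pi n.

Definition along {X : Type} (t : seq bool -> X) (pi : nat -> bool) : nat -> X :=
  fun n => t (prefix pi n).

Definition inf_often {Q : Type} (r : nat -> Q) (q : Q) : Prop :=
  forall N, exists n, (N <= n)%N /\ r n = q.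

Definition parity_acc {Q : Type} (alpha : Q -> nat) (r : nat -> Q) : Prop :=
  exists q, [/\ inf_often r q, ~~ odd (alpha q) &
                forall q', inf_often r q' -> (alpha q <= alpha q')%N].

Definition cone (u : seq bool) : set (nat -> bool) :=
  [set pi | prefix pi (size u) = u].
Definition cones : set (set (nat -> bool)) := [set cone u | u in setT].
Definition branch_space := g_sigma_algebraType cones.

Definition coin_flipping {R : realType} (mu : probability branch_space R) : Prop :=
  forall u : seq bool, mu (cone u) = ((2%:R ^- size u : R))%:E.

Definition qtree (Q : finType) (qi : Q) := seq bool -> Q.
HB.instance Definition _ (Q : finType) (qi : Q) := Choice.on (qtree qi).
HB.instance Definition _ (Q : finType) (qi : Q) :=
  isPointed.Build (qtree qi) (fun _ => qi).

Definition agree_upto {Q : finType} (n : nat) (r : seq bool -> Q) : set (seq bool -> Q) :=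
  [set rho | forall w, (size w <= n)%N -> rho w = r w].
Definition run_cyls (Q : finType) (qi : Q) : set (set (qtree qi)) :=
  [set A | exists n r, A = agree_upto n r].
Arguments run_cyls : clear implicits.
Definition run_space (Q : finType) (qi : Q) := g_sigma_algebraType (run_cyls Q qi).
Arguments run_space : clear implicits.

Definition tree_delta (R : realType) (Q S : finType) := Q -> S -> Q -> Q -> R.

(** The measure mu_t on runs of a probabilistic tree automaton on tree t:
    the set of runs agreeing with a partial run r on the nodes of length <= n
    has measure prod_{|u|<n} delta(r(u),t(u),r(u0),r(u1)); trees whose root
    is not q_iota are not runs and get measure 0. *)
Definition run_measure {R : realType} {Q S : finType} (dT : tree_delta R Q S)
  (qi : Q) (t : seq bool -> S) (P : probability (run_space Q qi) R) : Prop :=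
  forall (n : nat) (r : seq bool -> Q),
    P (agree_upto n r) =
    (((r [::] == qi)%:R *
      \prod_(k < n) \prod_(w : k.-tuple bool)
         dT (r w) (t w) (r (rcons w false)) (r (rcons w true))) : R)%:E.

Definition qual_accepting {R : realType} {Q : finType} (alpha : Q -> nat)
  (mu : probability branch_space R) (rho : seq bool -> Q) : Prop :=
  mu [set pi | parity_acc alpha (along rho pi)] = 1%E.

Definition Lqual {R : realType} {Q S : finType} (qi : Q) (alpha : Q -> nat)
  (mu : probability branch_space R)
  (Pt : (seq bool -> S) -> probability (run_space Q qi) R) : set (seq bool -> S) :=
  [set t | Pt t [set rho : run_space Q qi | qual_accepting alpha mu rho] = 1%E].

Definition binary_branching {R : realType} {Q S : finType} (delta : Q -> S -> Q -> R) : Prop :=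
  (forall q a p, delta q a p = 0 \/ delta q a p = 2%:R^-1) /\
  (forall q a, \sum_(p : Q) delta q a p = 1).

Definition delta_diag {R : realType} {Q S : finType} (delta : Q -> S -> Q -> R)
  : tree_delta R Q S :=
  fun p a q q' => if q == q' then delta p a q else 0.

Definition delta_switch {R : realType} {Q S : finType} (delta : Q -> S -> Q -> R)
  : tree_delta R Q S :=
  fun p a q q' =>
    if [&& q != q', delta p a q == 2%:R^-1 & delta p a q' == 2%:R^-1]
    then 2%:R^-1 else 0.

Arguments run_measure {R Q S} dT qi t P.
Arguments Lqual {R Q S} qi alpha mu Pt.

From HB Require Import structures.
From mathcomp Require Import all_boot all_order all_algebra.
From mathcomp Require Import all_classical all_reals all_analysis.
From mathcomp Require finmap.
From mathcomp Require Import measurable_realfun lebesgue_integral_fubini.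
From mathcomp.algebra_tactics Require Import lra.
Set Implicit Arguments. Unset Strict Implicit. Unset Printing Implicit Defensive.
Import Order.TTheory GRing.Theory Num.Theory.
Local Open Scope classical_set_scope.
Local Open Scope ring_scope.

(* Both tree automata send each child of a node, taken on its own, to state [q] with
   probability [delta p a q]; they differ only in how the two children are coupled.
   Hence along any fixed branch [pi] the states of a run form the same Markov chain
   under both run measures, so these measures agree on every event that depends only
   on the states along [pi], in particular on acceptance of [pi] (a pi-lambda argument
   on the cylinders "the run starts with [l] along [pi]"). By Fubini, the expected
   mu-mass of the accepting branches of a run is then the same under both run
   measures, and a [0,1]-valued function has expectation 1 exactly when it equals 1
   almost surely. *)

Fixpoint nodes_upto (n : nat) : seq (seq bool) :=
  if n is n'.+1 then
    [::] :: map (cons false) (nodes_upto n') ++ map (cons true) (nodes_upto n')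
  else [:: [::]].

Lemma mem_nodes_upto n w : (w \in nodes_upto n) = (size w <= n)%N.
Proof.
elim: n w => [|n IH] [|b w] //=; rewrite in_cons /= mem_cat ltnS -IH.
have cons_inj (c : bool) : injective (cons c) by move=> x y [].
have cons_notin (c : bool) s : (c :: w \in map (cons (~~ c)) s) = false.
  by apply/mapP => -[x _ [/eqP]]; case: c.
by case: b; rewrite ?(cons_notin true) ?(cons_notin false) (mem_map (cons_inj _)) ?orbF.
Qed.

Definition determined_upto {Q : Type} (n : nat) (A : set (seq bool -> Q)) :=
  forall rho rho', (forall w, (size w <= n)%N -> rho w = rho' w) -> A rho -> A rho'.

Section NodeCodes.
Variables (Q : finType) (qi : Q) (n : nat).

(* A restriction to depth [n] is stored as the tuple of its values on [nodes_upto n];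
   the canonical codes are exactly the codes of restrictions, so distinct canonical
   codes decode to disjoint cylinders. *)
Definition node_code := (size (nodes_upto n)).-tuple Q.

Definition decode_nodes (c : node_code) : seq bool -> Q :=
  fun w => nth qi c (index w (nodes_upto n)).

Definition encode_nodes (rho : seq bool -> Q) : node_code :=
  map_tuple rho (in_tuple (nodes_upto n)).

Definition canonical_code (c : node_code) : bool := c == encode_nodes (decode_nodes c).

Lemma encode_nodesK rho w : (size w <= n)%N -> decode_nodes (encode_nodes rho) w = rho w.
Proof.
rewrite -mem_nodes_upto => wn.
by rewrite /decode_nodes /= (nth_map [::]) ?index_mem ?nth_index.
Qed.

Lemma canonical_encode_nodes rho : canonical_code (encode_nodes rho).
Proof.
apply/eqP/val_inj/eq_in_map => w; rewrite mem_nodes_upto => wn.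
by rewrite encode_nodesK.
Qed.

Lemma determined_upto_bigcup (A : set (seq bool -> Q)) : determined_upto n A ->
  A = \bigcup_(c in [set c | canonical_code c && `[< A (decode_nodes c) >]])
        agree_upto n (decode_nodes c).
Proof.
move=> dA; apply/seteqP; split => rho.
  move=> Arho; exists (encode_nodes rho); last by move=> w hw; rewrite encode_nodesK.
  rewrite /= canonical_encode_nodes; apply/asboolP.
  by apply: (dA rho) => // w hw; rewrite encode_nodesK.
by case=> c /= /andP [_ /asboolP Ac] hrho; apply: (dA (decode_nodes c)) => // w /hrho.
Qed.

Lemma trivIset_agree_upto_decode (B : pred node_code) :
  trivIset [set c | canonical_code c && B c] (fun c => agree_upto n (decode_nodes c)).
Proof.
move=> c c' /andP [/eqP cc _] /andP [/eqP cc' _] [rho [h1 h2]].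
rewrite cc cc'; congr encode_nodes; apply/funext => w; case: (boolP (w \in nodes_upto n)).
  by rewrite mem_nodes_upto => wn; rewrite -h1 // h2.
by move=> wn; rewrite /decode_nodes !nth_default // size_tuple leqNgt index_mem wn.
Qed.

End NodeCodes.

Lemma measure_bigcup_fin d (T : measurableType d) (R : realType)
  (mu : {measure set T -> \bar R}) (I : finType) (p : pred I) (F : I -> set T) :
  (forall i, p i -> measurable (F i)) -> trivIset [set i | p i] F ->
  mu (\bigcup_(i in [set i | p i]) F i) = (\sum_(i | p i) mu (F i))%E.
Proof.
move=> mF tF; rewrite measure_fin_bigcup // ?fsbig_finite; try exact: finite_finset.
rewrite -[RHS]big_filter; apply: perm_big; apply: uniq_perm.
- exact: finmap.fset_uniq.
- by rewrite filter_uniq // index_enum_uniq.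
move=> i; rewrite in_fset_set; last exact: finite_finset.
rewrite mem_filter mem_index_enum andbT.
by apply/idP/idP => [/set_mem | pi_i]; last exact: mem_set.
Qed.

Lemma measurable_determined_upto (Q : finType) (qi : Q) n (A : set (run_space Q qi)) :
  determined_upto n A -> measurable A.
Proof.
move=> dA; rewrite (determined_upto_bigcup qi dA); apply: fin_bigcup_measurable.
  exact: finite_finset.
by move=> c _; apply: sub_sigma_algebra; exists n, (decode_nodes qi c).
Qed.

Lemma take_mkseq (T : Type) (f : nat -> T) m n :
  (m <= n)%N -> take m (mkseq f n) = mkseq f m.
Proof.
by move=> mn; rewrite /mkseq -map_take take_iota; congr map; congr iota; exact: minn_idPl.
Qed.

Definition prefix_tuple pi n : n.-tuple bool :=
  @Tuple n bool (prefix pi n) (introT eqP (size_mkseq pi n)).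

Definition branch_cylinder {Q : Type} (pi : nat -> bool) (l : seq Q) :
  set (seq bool -> Q) := [set rho | mkseq (along rho pi) (size l) = l].

Section BranchCylinder.
Variables (Q : finType) (pi : nat -> bool).

Lemma branch_cylinder_nil : branch_cylinder pi [::] = [set: seq bool -> Q].
Proof. by apply/seteqP; split. Qed.

Lemma branch_cylinder1 (q : Q) : branch_cylinder pi [:: q] = agree_upto 0 (fun _ => q).
Proof.
apply/seteqP; split => rho /=; rewrite /branch_cylinder /=.
  by move=> [e] [|//] _.
by move=> h; rewrite /mkseq /= /along h.
Qed.

Lemma branch_cylinder_rcons (l : seq Q) q :
  branch_cylinder pi (rcons l q) =
  branch_cylinder pi l `&` [set rho | rho (prefix pi (size l)) = q].
Proof.
apply/seteqP; split => rho; rewrite /branch_cylinder /= size_rcons.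
  by rewrite mkseqS => /eqP; rewrite eqseq_rcons => /andP [/eqP -> /eqP].
by move=> [e1 e2]; rewrite mkseqS e1 /along e2.
Qed.

Lemma determined_branch_cylinder (l : seq Q) :
  determined_upto (size l).-1 (branch_cylinder pi l).
Proof.
move=> rho rho' e; rewrite /branch_cylinder /= => h; rewrite -[RHS]h.
rewrite /mkseq; apply/eq_in_map => k; rewrite mem_iota add0n => kl.
rewrite /along e // size_mkseq.
by case: (size l) kl.
Qed.

End BranchCylinder.

Definition child {T : Type} (b : bool) (x : T * T) : T := if b then x.2 else x.1.

Definition child_law {R : realType} {Q S : finType} (dT : tree_delta R Q S)
  (delta : Q -> S -> Q -> R) : Prop :=
  forall p a b q, \sum_(x : Q * Q) (child b x == q)%:R * dT p a x.1 x.2 = delta p a q.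

Section ExtendLevel.
Variables (Q : Type) (n : nat) (r : seq bool -> Q) (h : {ffun n.-tuple bool -> Q * Q}).

Definition extend_level : seq bool -> Q := fun w =>
  if size w == n.+1 then child (nth false w n) (h (insubd (nseq_tuple n false) (take n w)))
  else r w.

Lemma extend_level_small w : (size w <= n)%N -> extend_level w = r w.
Proof. by rewrite /extend_level; case: eqP => // ->; rewrite ltnn. Qed.

Lemma extend_level_rcons (w : n.-tuple bool) b : extend_level (rcons w b) = child b (h w).
Proof.
rewrite /extend_level size_rcons size_tuple eqxx -cats1 take_size_cat ?size_tuple //.
by rewrite valKd nth_cat size_tuple ltnn subnn.
Qed.

End ExtendLevel.

Lemma agree_upto_rcons_bigcup (Q : finType) n (r : seq bool -> Q) (u : n.-tuple bool) b q :
  agree_upto n r `&` [set rho | rho (rcons u b) = q] =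
  \bigcup_(h in [set h : {ffun n.-tuple bool -> Q * Q} | child b (h u) == q])
    agree_upto n.+1 (extend_level r h).
Proof.
apply/seteqP; split => rho.
  move=> [hr hq].
  exists [ffun w : n.-tuple bool => (rho (rcons w false), rho (rcons w true))].
    by rewrite /= ffunE -hq; clear hq; case: b.
  move=> w; rewrite leq_eqVlt ltnS => /orP [/eqP e|wn]; last first.
    by rewrite extend_level_small ?hr.
  have wE : rcons (take n w) (nth false w n) = w.
    by rewrite -take_nth ?e // -e take_size.
  rewrite /extend_level e eqxx ffunE val_insubd size_takel ?e // eqxx.
  by move: wE; case: (nth false w n) => /= ->.
move=> [h /= /eqP hu hrho]; split => [w wn|/=].
  by rewrite hrho ?extend_level_small // (leq_trans wn).
by rewrite hrho ?extend_level_rcons // size_rcons size_tuple.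
Qed.

Lemma trivIset_agree_upto_extend_level (Q : finType) n (r : seq bool -> Q)
  (B : set {ffun n.-tuple bool -> Q * Q}) :
  trivIset B (fun h => agree_upto n.+1 (extend_level r h)).
Proof.
move=> h h' _ _ [rho [h1 h2]]; apply/ffunP => w.
have e c : child c (h w) = child c (h' w).
  have wc : (size (rcons w c) <= n.+1)%N by rewrite size_rcons size_tuple.
  by rewrite -(extend_level_rcons r h) -(extend_level_rcons r h') -h1 // -h2.
by move: (e false) (e true); case: (h w) (h' w) => ? ? [? ?] /= -> ->.
Qed.

Section RunMeasure.
Variables (R : realType) (Q S : finType) (qi : Q).
Variables (dT : tree_delta R Q S) (delta : Q -> S -> Q -> R).
Variables (t : seq bool -> S) (P : probability (run_space Q qi) R).
Hypothesis P_run : run_measure dT qi t P.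
Hypothesis dT_law : child_law dT delta.
Hypothesis delta_sum1 : forall p a, \sum_q delta p a q = 1.

Lemma tree_delta_sum1 p a : \sum_(x : Q * Q) dT p a x.1 x.2 = 1.
Proof.
rewrite -(delta_sum1 p a); under [RHS]eq_bigr do rewrite -(dT_law p a false).
rewrite exchange_big /=; apply: eq_bigr => x _; rewrite -big_distrl /=.
by rewrite (bigD1 x.1) //= eqxx big1 ?addr0 ?mul1r // => q /negbTE; rewrite eq_sym => ->.
Qed.

Lemma measure_agree_upto_extend_level n r h :
  P (agree_upto n.+1 (extend_level r h)) =
  (P (agree_upto n r) * (\prod_(w : n.-tuple bool) dT (r w) (t w) (h w).1 (h w).2)%:E)%E.
Proof.
rewrite !P_run big_ord_recr /= -EFinM extend_level_small // -!mulrA.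
congr (_ * (_ * _))%:E.
  apply: eq_bigr => i _; apply: eq_bigr => w _.
  have wn : (size w <= n)%N by rewrite size_tuple ltnW.
  by rewrite !extend_level_small // size_rcons size_tuple.
by apply: eq_bigr => w _; rewrite !extend_level_rcons extend_level_small // size_tuple.
Qed.

(* Summing over the choices of all children of level [n] factorises node by node;
   only node [u] is constrained, and its factor is the child law. *)
Lemma sum_prod_level_child n (r : seq bool -> Q) (u : n.-tuple bool) b q :
  \sum_(h : {ffun n.-tuple bool -> Q * Q} | child b (h u) == q)
     \prod_(w : n.-tuple bool) dT (r w) (t w) (h w).1 (h w).2 = delta (r u) (t u) q.
Proof.
pose G w (x : Q * Q) :=
  (if w == u then (child b x == q)%:R else 1) * dT (r w) (t w) x.1 x.2.
transitivity (\sum_(h : {ffun n.-tuple bool -> Q * Q}) \prod_w G w (h w)).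
  rewrite big_mkcond; apply: eq_bigr => h _.
  rewrite /G big_split /= -big_mkcond /= big_pred1_eq.
  by case: (_ == q); rewrite ?mul1r ?mul0r.
rewrite -bigA_distr_bigA (bigD1 u) //= [X in _ * X]big1 ?mulr1.
  by rewrite -(dT_law (r u) (t u) b q); apply: eq_bigr => x _; rewrite /G eqxx.
move=> w /negbTE wu; rewrite -(tree_delta_sum1 (r w) (t w)).
by apply: eq_bigr => x _; rewrite /G wu mul1r.
Qed.

Lemma measure_agree_upto_rcons n r (u : n.-tuple bool) b q :
  P (agree_upto n r `&` [set rho | rho (rcons u b) = q]) =
  (P (agree_upto n r) * (delta (r u) (t u) q)%:E)%E.
Proof.
rewrite agree_upto_rcons_bigcup measure_bigcup_fin; last first.
- exact: trivIset_agree_upto_extend_level.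
- by move=> h _; apply: sub_sigma_algebra; exists n.+1, (extend_level r h).
rewrite (eq_bigr _ (fun h _ => measure_agree_upto_extend_level r h)).
rewrite P_run; under eq_bigr do rewrite -EFinM.
by rewrite sumEFin -EFinM -mulr_sumr sum_prod_level_child.
Qed.

Lemma measure_determined_rcons n A (u : n.-tuple bool) b p q :
  determined_upto n A -> (forall rho, A rho -> rho u = p) ->
  P (A `&` [set rho | rho (rcons u b) = q]) = (P A * (delta p (t u) q)%:E)%E.
Proof.
move=> dA Ap; have AE := determined_upto_bigcup qi dA.
have m_agree (c : node_code Q n) :
    measurable (agree_upto n (decode_nodes qi c) : set (run_space Q qi)).
  by apply: sub_sigma_algebra; exists n, (decode_nodes qi c).
rewrite [in LHS]AE [in RHS]AE setI_bigcupl !measure_bigcup_fin //.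
- rewrite ge0_sume_distrl; last by move=> *; exact: measure_ge0.
  apply: eq_bigr => c /andP [_ /asboolP Ac].
  by rewrite -(Ap _ Ac); exact: measure_agree_upto_rcons.
- exact: trivIset_agree_upto_decode.
- move=> c _; apply: measurableI => //.
  apply: (@measurable_determined_upto _ _ n.+1) => rho rho' e <-.
  by rewrite e // size_rcons size_tuple.
- move=> c c' hc hc' [rho [[h1 _] [h2 _]]].
  by apply: (trivIset_agree_upto_decode hc hc'); exists rho.
Qed.

Lemma measure_branch_cylinder1 pi q : P (branch_cylinder pi [:: q]) = (q == qi)%:R%:E.
Proof. by rewrite branch_cylinder1 P_run big_ord0 mulr1. Qed.

Lemma measure_branch_cylinder_rcons pi l p q :
  P (branch_cylinder pi (rcons (rcons l p) q)) =
  (P (branch_cylinder pi (rcons l p)) * (delta p (t (prefix pi (size l))) q)%:E)%E.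
Proof.
have -> : prefix pi (size l) = prefix_tuple pi (size l) by [].
rewrite branch_cylinder_rcons size_rcons.
have -> : prefix pi (size l).+1 = rcons (prefix_tuple pi (size l)) (pi (size l)).
  exact: mkseqS.
apply: measure_determined_rcons.
  by have := @determined_branch_cylinder Q pi (rcons l p); rewrite size_rcons.
by move=> rho; rewrite branch_cylinder_rcons => -[].
Qed.

End RunMeasure.

Lemma measurable_parity_acc d (T : measurableType d) (Q : finType)
  (f : T -> nat -> Q) (alpha : Q -> nat) :
  (forall n q, measurable [set x | f x n = q]) ->
  measurable [set x | parity_acc alpha (f x)].
Proof.
move=> mf.
have mIO q : measurable [set x | inf_often (f x) q].
  have -> : [set x | inf_often (f x) q] =
      \bigcap_N \bigcup_(n in [set n | (N <= n)%N]) [set x | f x n = q].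
    apply/seteqP; split => x h N.
      by move=> _; have [n [hn e]] := h N; exists n.
    by have [n hn e] := h N I; exists n.
  by apply: bigcapT_measurable => N; apply: bigcup_measurable => n _.
have -> : [set x | parity_acc alpha (f x)] =
    \bigcup_(q in [set q | ~~ odd (alpha q)])
      ([set x | inf_often (f x) q] `&`
       \bigcap_(q' in [set q' | (alpha q' < alpha q)%N]) ~` [set x | inf_often (f x) q']).
  apply/seteqP; split => x.
    move=> [q [hq hodd hmin]]; exists q => //; split => // q' /= lt /hmin.
    by rewrite leqNgt lt.
  move=> [q /= hodd [hq hmin]]; exists q; split => // q' hq'.
  by rewrite leqNgt; apply/negP => lt; exact: hmin q' lt hq'.
apply: fin_bigcup_measurable; first exact: finite_finset.
move=> q _; apply: measurableI => //.
by apply: fin_bigcap_measurable; [exact: finite_finset | move=> q' _; exact: measurableC].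
Qed.

Definition branch_events (Q : finType) (qi : Q) (pi : nat -> bool) :
  set (set (run_space Q qi)) := [set branch_cylinder pi l | l in setT] `|` [set set0].
Arguments branch_events {Q} qi pi.

Section BranchEvents.
Variables (Q : finType) (qi : Q) (pi : nat -> bool).

Lemma branch_events_measurable : branch_events qi pi `<=` measurable.
Proof.
move=> A [[l _ <-]|->]; last exact: measurable0.
exact: measurable_determined_upto (@determined_branch_cylinder _ pi l).
Qed.

Lemma branch_cylinderI (l l' : seq Q) : (size l <= size l')%N ->
  branch_cylinder pi l `&` branch_cylinder pi l' =
  if take (size l) l' == l then branch_cylinder pi l' else set0.
Proof.
move=> ll'; apply/seteqP; split => rho.
  by move=> [hl hl']; rewrite -[l' in take _ l']hl' take_mkseq // hl eqxx.
case: eqP => [<-|_ //] hl'; split => //.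
by rewrite /branch_cylinder /= size_takel // -[l' in take _ l']hl' take_mkseq.
Qed.

Lemma branch_events_setI_closed : setI_closed (branch_events qi pi).
Proof.
have cylI l l' : (size l <= size l')%N ->
    branch_events qi pi (branch_cylinder pi l `&` branch_cylinder pi l').
  by move=> ll'; rewrite branch_cylinderI //; case: ifP => _; [left; exists l' | right].
move=> A B [[l _ <-]|->] [[l' _ <-]|->]; try by right; rewrite ?set0I ?setI0.
have [ll'|/ltnW l'l] := leqP (size l) (size l'); first exact: cylI.
by rewrite setIC; exact: cylI.
Qed.

Lemma branch_state_measurable n q :
  measurable ([set rho | rho (prefix pi n) = q] :
                set (g_sigma_algebraType (branch_events qi pi))).
Proof.
have -> : [set rho : g_sigma_algebraType (branch_events qi pi) | rho (prefix pi n) = q] =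
    \bigcup_(l : seq Q) (if size l == n then branch_cylinder pi (rcons l q) else set0).
  apply/seteqP; split => rho.
    move=> hq; exists (mkseq (along rho pi) n) => //.
    rewrite size_mkseq eqxx branch_cylinder_rcons size_mkseq.
    by split => //; rewrite /branch_cylinder /= size_mkseq.
  move=> [l _]; case: eqP => [<-|_ //].
  by rewrite branch_cylinder_rcons => -[].
apply: countable_bigcupT_measurable; first exact: countableP.
move=> l; case: ifP => _; last exact: measurable0.
by apply: sub_sigma_algebra; left; exists (rcons l q).
Qed.

End BranchEvents.

Section BranchLaw.
Variables (R : realType) (Q S : finType) (qi : Q) (delta : Q -> S -> Q -> R).
Variables (t : seq bool -> S) (pi : nat -> bool).
Hypothesis delta_sum1 : forall p a, \sum_q delta p a q = 1.
Variables (dT1 dT2 : tree_delta R Q S) (P1 P2 : probability (run_space Q qi) R).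
Hypotheses (P1_run : run_measure dT1 qi t P1) (P2_run : run_measure dT2 qi t P2).
Hypotheses (dT1_law : child_law dT1 delta) (dT2_law : child_law dT2 delta).

Lemma eq_measure_branch_cylinder l : P1 (branch_cylinder pi l) = P2 (branch_cylinder pi l).
Proof.
elim/last_ind: l => [|l q IH]; first by rewrite branch_cylinder_nil !probability_setT.
case/lastP: l IH => [|l p] IH.
  by rewrite (measure_branch_cylinder1 P1_run) (measure_branch_cylinder1 P2_run).
rewrite (measure_branch_cylinder_rcons P1_run dT1_law delta_sum1).
by rewrite (measure_branch_cylinder_rcons P2_run dT2_law delta_sum1) IH.
Qed.

Lemma eq_measure_parity_acc_along alpha :
  P1 [set rho | parity_acc alpha (along rho pi)] =
  P2 [set rho | parity_acc alpha (along rho pi)].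
Proof.
apply: (@g_sigma_algebra_measure_unique _ R _ _ (@branch_events_measurable Q qi pi)
          (fun _ => branch_cylinder pi [::])).
- by move=> _; left; exists [::].
- by rewrite branch_cylinder_nil bigcup_const.
- exact: branch_events_setI_closed.
- by move=> A [[l _ <-]|->]; [exact: eq_measure_branch_cylinder | rewrite !measure0].
- move=> _; rewrite branch_cylinder_nil.
  by apply: (le_lt_trans (probability_le1 P1 measurableT)); exact: ltry.
- exact: measurable_parity_acc (@branch_state_measurable Q qi pi).
Qed.

End BranchLaw.

Section UnitIntervalIntegral.
Local Open Scope ereal_scope.
Variables (d : measure_display) (T : measurableType d) (R : realType).
Variables (P : probability T R) (f : T -> \bar R).
Hypothesis mf : measurable_fun setT f.
Hypothesis f01 : forall x, 0 <= f x <= 1.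

Let f0 x : 0 <= f x. Proof. by have /andP[] := f01 x. Qed.
Let f1 x : f x <= 1. Proof. by have /andP[] := f01 x. Qed.
Let measurable_ge (c : R) : measurable [set x | c%:E <= f x].
Proof. by rewrite -[X in measurable X]setTI; exact: emeasurable_fun_c_infty. Qed.
Let measurable_le (c : R) : measurable [set x | f x <= c%:E].
Proof. by rewrite -[X in measurable X]setTI; exact: emeasurable_fun_infty_c. Qed.

Lemma integral_eq1_of_ge1 : P [set x | 1 <= f x] = 1 -> \int[P]_x f x = 1.
Proof.
have mA := measurable_ge 1; move=> PA; apply/eqP; rewrite eq_le; apply/andP; split.
  rewrite -[leRHS](probability_setT P) -[P setT]mul1e -integral_cst //.
  by apply: ge0_le_integral => // x _; rewrite ?f0 ?f1.
rewrite -PA -[X in P X]setIT -integral_indic //; apply: ge0_le_integral => //.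
  by apply: measurableT_comp => //; exact: measurable_indic.
by move=> x _; rewrite indicE; case: (boolP (x \in _)) => [/set_mem ->|_] //=.
Qed.

(* Splitting the integral at the level [1 - e] gives [1 <= (1 - e) a + (1 - a)],
   with [a] the measure of the part below the level. *)
Lemma measure_le_sub_eq0 (e : R) : (0 < e)%R -> \int[P]_x f x = 1 ->
  P [set x | f x <= (1 - e)%:E] = 0.
Proof.
move=> e0 hI; set A := [set x | _].
have mA : measurable A := measurable_le (1 - e).
have PAfin : P A \is a fin_num.
  by rewrite ge0_fin_numE ?measure_ge0 // (le_lt_trans (probability_le1 _ _)) ?ltry.
have hP : P A = (fine (P A))%:E by rewrite fineK.
set a := fine (P A) in hP *.
have a0 : (0 <= a)%R by rewrite -lee_fin -hP measure_ge0.
have hC : P (~` A) = (1 - a)%:E by rewrite probability_setC // hP.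
suff : 1 <= ((1 - e) * a + (1 - a))%:E.
  by rewrite lee_fin hP => h; congr (_%:E); apply/eqP; rewrite eq_le a0 andbT; nra.
rewrite -[leLHS]hI -(setUv A) ge0_integral_setU //; last 3 first.
- exact: measurableC.
- by rewrite setUv.
- by apply/disj_set2P; rewrite setICr.
rewrite EFinD EFinM -hP -hC; apply: leeD.
  rewrite -integral_cst //; apply: ge0_le_integral => //; exact: measurable_funS mf.
rewrite -[X in _ <= X]mul1e -integral_cst; last exact: measurableC.
by apply: ge0_le_integral => //; [exact: measurableC | exact: measurable_funS mf].
Qed.

Lemma ge1_of_integral_eq1 : \int[P]_x f x = 1 -> P [set x | 1 <= f x] = 1.
Proof.
move=> hI; set A := [set x | _].
have mA : measurable A := measurable_ge 1.
suff PAC : P (~` A) = 0.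
  by rewrite -(setCK A) probability_setC ?PAC ?sube0 //; exact: measurableC.
apply/eqP; rewrite eq_le measure_ge0 andbT.
pose B k := [set x | f x <= (1 - k.+1%:R^-1)%:E].
have mB k : measurable (B k) := measurable_le _.
rewrite -(@eseries0 _ (fun k => P (B k)) 0 xpredT); last first.
  by move=> k _ _; apply: measure_le_sub_eq0.
apply: measure_sigma_subadditive => //; first exact: measurableC.
move=> x /= nx; have : f x \is a fin_num.
  by rewrite ge0_fin_numE // (le_lt_trans (f1 x)) ?ltry.
move/fineK => fx; have lt1 : (fine (f x) < 1)%R.
  rewrite lt_neqAle -lee_fin fx f1 andbT; apply/eqP => e1; apply: nx.
  by rewrite /A /= -fx e1.
have [k hk] := ltr_add_invr lt1; exists k => //=.
by rewrite /B /= -fx lee_fin lerBrDr ltW.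
Qed.

End UnitIntervalIntegral.

Lemma sum_child_eq {R : realType} {Q : finType} (F : Q -> Q -> R) b q :
  \sum_(x : Q * Q) (child b x == q)%:R * F x.1 x.2 = \sum_i (if b then F i q else F q i).
Proof.
rewrite -(pair_bigA _ (fun i j => (child b (i, j) == q)%:R * F i j)) /=; case: b => /=.
  apply: eq_bigr => i _; rewrite (bigD1 q) //= eqxx mul1r big1 ?addr0 //.
  by move=> j /negbTE ->; rewrite mul0r.
rewrite (bigD1 q) //= [X in _ + X]big1 ?addr0 => [|i /negbTE iq]; last first.
  by apply: big1 => j _; rewrite iq mul0r.
by apply: eq_bigr => j _; rewrite eqxx mul1r.
Qed.

Section ChildLaws.
Variables (R : realType) (Q S : finType) (delta : Q -> S -> Q -> R).

Lemma child_law_delta_diag : child_law (delta_diag delta) delta.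
Proof.
move=> p a b q; rewrite sum_child_eq (bigD1 q) //= /delta_diag eqxx.
by rewrite big1 ?addr0 ?if_same // => i /negbTE iq; rewrite iq eq_sym iq if_same.
Qed.

Hypothesis delta_bin : binary_branching delta.

Let half : R := 2%:R^-1.

Lemma delta_switchC p a i j : delta_switch delta p a i j = delta_switch delta p a j i.
Proof.
rewrite /delta_switch [i == j]eq_sym.
by case: (delta p a i == _); case: (delta p a j == _); rewrite ?andbF.
Qed.

(* The partner of [q] ranges over the other states of probability 1/2,
   whose total mass is [1 - 1/2]. *)
Lemma sum_delta_switch p a q : \sum_i delta_switch delta p a i q = delta p a q.
Proof.
have delta_half j : (if delta p a j == half then half else 0) = delta p a j.
  by case: (delta_bin.1 p a j) => ->; rewrite ?eqxx // eq_sym invr_eq0 pnatr_eq0.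
have [qh|qh] := eqVneq (delta p a q) half; last first.
  rewrite big1 => [|i _]; last by rewrite /delta_switch (negbTE qh) !andbF.
  by case: (delta_bin.1 p a q) qh => -> //; rewrite eqxx.
transitivity (\sum_(i | i != q) delta p a i).
  rewrite (bigD1 q) //= {1}/delta_switch eqxx add0r.
  by apply: eq_bigr => i iq; rewrite /delta_switch iq qh eqxx andbT delta_half.
have := delta_bin.2 p a; rewrite (bigD1 q) //= qh => sum1.
by apply: (addrI half); rewrite sum1 {1}(splitr 1) div1r.
Qed.

Lemma child_law_delta_switch : child_law (delta_switch delta) delta.
Proof.
move=> p a b q; rewrite sum_child_eq -(sum_delta_switch p a q).
by case: b => //; apply: eq_bigr => i _; rewrite delta_switchC.
Qed.

End ChildLaws.

Section AcceptingMass.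
Local Open Scope ereal_scope.
Variables (R : realType) (Q : finType) (qi : Q) (alpha : Q -> nat).
Variable mu : probability branch_space R.

Definition accepting_pairs : set (run_space Q qi * branch_space) :=
  [set z | parity_acc alpha (along z.1 z.2)].

Lemma measurable_accepting_pairs : measurable accepting_pairs.
Proof.
pose along_pair (z : run_space Q qi * branch_space) := along z.1 z.2.
apply: (measurable_parity_acc (f := along_pair)) => n q.
have -> : [set z : run_space Q qi * branch_space | along z.1 z.2 n = q] =
    \bigcup_(u : n.-tuple bool) ([set rho : run_space Q qi | rho u = q] `*` cone u).
  apply/seteqP; split => -[rho pi] /=.
    by move=> h; exists (prefix_tuple pi n) => //; split; rewrite //= /cone /= size_mkseq.
  by move=> [u _ [/= h1]]; rewrite /cone /= size_tuple /along => ->.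
apply: countable_bigcupT_measurable; first exact: countableP.
move=> u; apply: measurableX; last by apply: sub_sigma_algebra; exists u.
by apply: (@measurable_determined_upto _ qi n) => rho rho' e <-; rewrite e // size_tuple.
Qed.

Definition accepting_mass (rho : run_space Q qi) : \bar R :=
  mu [set pi | parity_acc alpha (along rho pi)].

Lemma xsection_accepting_pairs rho :
  xsection accepting_pairs rho = [set pi | parity_acc alpha (along rho pi)].
Proof. by apply/seteqP; split => pi; rewrite /xsection /= inE. Qed.

Lemma ysection_accepting_pairs pi :
  ysection accepting_pairs pi = [set rho | parity_acc alpha (along rho pi)].
Proof. by apply/seteqP; split => rho; rewrite /ysection /= inE. Qed.

Lemma accepting_massE rho : accepting_mass rho = mu (xsection accepting_pairs rho).
Proof. by rewrite xsection_accepting_pairs. Qed.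

Lemma measurable_accepting_mass : measurable_fun setT accepting_mass.
Proof.
rewrite (_ : accepting_mass = fun rho => mu (xsection accepting_pairs rho)).
  exact: measurable_fun_xsection measurable_accepting_pairs.
by apply/funext => rho; exact: accepting_massE.
Qed.

Lemma accepting_mass01 rho : 0 <= accepting_mass rho <= 1.
Proof.
rewrite accepting_massE measure_ge0 probability_le1 //.
exact: measurable_xsection measurable_accepting_pairs.
Qed.

Lemma integral_accepting_mass (P : probability (run_space Q qi) R) :
  \int[P]_rho accepting_mass rho =
  \int[mu]_pi P [set rho | parity_acc alpha (along rho pi)].
Proof.
have := indic_fubini_tonelli P mu measurable_accepting_pairs.
rewrite (indic_fubini_tonelli_FE mu measurable_accepting_pairs).
rewrite (indic_fubini_tonelli_GE P measurable_accepting_pairs).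
move=> fubini; under eq_integral do rewrite accepting_massE.
rewrite fubini.
by apply: eq_integral => pi _; rewrite /= ysection_accepting_pairs.
Qed.

Lemma qual_acceptingE :
  [set rho : run_space Q qi | qual_accepting alpha mu rho] =
  [set rho | 1 <= accepting_mass rho].
Proof.
apply/seteqP; split => rho; rewrite /= /qual_accepting -/(accepting_mass rho).
  by move=> ->.
move=> h.
by apply/eqP; rewrite eq_le h andbT; have /andP[] := accepting_mass01 rho.
Qed.

End AcceptingMass.

Theorem lemma3p10 (R : realType) (Q S : finType) (delta : Q -> S -> Q -> R)
  (qi : Q) (alpha : Q -> nat) :
  binary_branching delta ->
  forall mu : probability branch_space R, coin_flipping mu ->
  forall P1 P2 : (seq bool -> S) -> probability (run_space Q qi) R,
  (forall t, run_measure (delta_diag delta) qi t (P1 t)) ->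
  (forall t, run_measure (delta_switch delta) qi t (P2 t)) ->
  Lqual qi alpha mu P1 = Lqual qi alpha mu P2.
Proof.
move=> delta_bin mu _ P1 P2 P1_run P2_run.
have eq_integral_mass t : (\int[P1 t]_rho accepting_mass alpha mu rho =
                           \int[P2 t]_rho accepting_mass alpha mu rho)%E.
  rewrite !integral_accepting_mass; apply: eq_integral => pi _.
  apply: (eq_measure_parity_acc_along pi delta_bin.2 (P1_run t) (P2_run t)).
    exact: child_law_delta_diag.
  exact: child_law_delta_switch.
have mass_meas := @measurable_accepting_mass R Q qi alpha mu.
have mass01 := @accepting_mass01 R Q qi alpha mu.
apply/seteqP; split => t; rewrite /Lqual /= qual_acceptingE => h;
  apply: (ge1_of_integral_eq1 mass_meas mass01).
  by rewrite -eq_integral_mass; exact: integral_eq1_of_ge1.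
by rewrite eq_integral_mass; exact: integral_eq1_of_ge1.
Qed.
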